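(* Let $G$ be a directed graph and $D$ a demand. Suppose there exists a $2h$-length moving cut $C$ with $2h$-length sparsity $\phi=\mathrm{spars}_{2h}(C,D)$. Then any flow routing $D$ in $G$ all of whose flow paths have length at most $h$ has congestion at least $\frac{1}{2\phi}$.
   Context: $G=(V,E)$ is a finite directed graph with positive integer edge lengths $\ell(e)$ and capacities $u(e)$. A demand is $D:V\times V\to\mathbb{R}_{\ge0}$. For $H>0$, an $H$-length moving cut is $C:E\to\{0,\tfrac1H,\dots\}\cap[0,1]$, with size $|C|=\sum_eu(e)C(e)$; $G-C$ is $G$ with lengths $\ell(e)+H\cdot C(e)$. $\mathrm{sep}_{h'}(C,D)=\sum_{(u,v):\mathrm{dist}_{G-C}(u,v)>h'}D(u,v)$ and (when positive) $\mathrm{spars}_{h'}(C,D)=|C|/\mathrm{sep}_{h'}(C,D)$. A flow assigns nonnegative values to simple directed paths; it routes $D$ if for each ordered pair $(v,w)$ the total value on $v\to w$ paths equals $D(v,w)$; its congestion is $\max_e(\text{flow through }e)/u(e)$. *)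

From HB Require Import structures.
From mathcomp Require Import all_boot all_order all_algebra.
From mathcomp Require Import boolp classical_sets reals constructive_ereal ereal.
Set Implicit Arguments. Unset Strict Implicit. Unset Printing Implicit Defensive.
Import Order.TTheory GRing.Theory Num.Theory.
Local Open Scope ring_scope.
Local Open Scope classical_set_scope.

Section Graph.
Variables (V E : finType) (src dst : E -> V).

Fixpoint walkb (x : V) (p : seq E) (y : V) : bool :=
  match p with
  | [::] => x == y
  | e :: p' => (src e == x) && walkb (dst e) p' y
  end.

(* A path is given by its start vertex and its edge sequence (so the trivial
   path at v is (v, [::])). *)
Definition pstart (q : V * seq E) : V := q.1.
Definition pend (q : V * seq E) : V := last q.1 (map dst q.2).

Definition simple_path (q : V * seq E) : bool :=
  walkb q.1 q.2 (pend q) && uniq (q.1 :: map dst q.2).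

Variable R : realType.

Definition wlen (len : E -> R) (p : seq E) : R := \sum_(e <- p) len e.

(* dist_len(x, y) = inf over directed walks from x to y (+oo if none). *)
Definition dist (len : E -> R) (x y : V) : \bar R :=
  ereal_inf [set (wlen len p)%:E | p in [set p | walkb x p y]].

Definition moving_cut (H : R) (C : E -> R) : Prop :=
  forall e, (exists k : nat, C e = k%:R / H) /\ 0 <= C e <= 1.

Definition cut_size (u : E -> nat) (C : E -> R) : R := \sum_e (u e)%:R * C e.

Definition len_minus_cut (l : E -> nat) (H : R) (C : E -> R) : E -> R :=
  fun e => (l e)%:R + H * C e.

Definition sep (l : E -> nat) (H : R) (C : E -> R) (h' : R) (D : V -> V -> R) : R :=
  \sum_(x : V) \sum_(y : V | (h'%:E < dist (len_minus_cut l H C) x y)%E) D x y.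

(* spars_{h'}(C, D) = |C| / sep_{h'}(C, D)  (used only when sep > 0) *)
Definition spars (l u : E -> nat) (H : R) (C : E -> R) (h' : R) (D : V -> V -> R) : R :=
  cut_size u C / sep l H C h' D.

Definition is_flow (S : seq (V * seq E)) (f : V * seq E -> R) : Prop :=
  [/\ uniq S,
      forall q, q \notin S -> f q = 0
    & forall q, q \in S -> simple_path q /\ 0 <= f q].

Definition routes (S : seq (V * seq E)) (f : V * seq E -> R) (D : V -> V -> R) : Prop :=
  forall v w, \sum_(q <- S | (pstart q == v) && (pend q == w)) f q = D v w.

Definition edge_load (S : seq (V * seq E)) (f : V * seq E -> R) (e : E) : R :=
  \sum_(q <- S | e \in q.2) f q.

Definition congestion (u : E -> nat) (S : seq (V * seq E)) (f : V * seq E -> R) : R :=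
  \big[Order.max/0]_(e : E) (edge_load S f e / (u e)%:R).

End Graph.

From HB Require Import structures.
From mathcomp Require Import all_boot all_order all_algebra.
From mathcomp Require Import boolp classical_sets reals constructive_ereal ereal.
From mathcomp Require Import ring lra.
Set Implicit Arguments. Unset Strict Implicit. Unset Printing Implicit Defensive.
Import Order.TTheory GRing.Theory Num.Theory.
Local Open Scope ring_scope.

(* A flow path q of length at most h whose endpoints are more than 2h apart in
   G - C gains more than h from the cut, i.e. 2h * C(q) > h, so C(q) > 1/2.
   Weighting by flow values and regrouping by edges (flow paths are simple),
   sep_{2h}(C, D) <= 2 sum_q f(q) C(q) = 2 sum_e C(e) load(e) <= 2 |C| cong. *)

Section FlowCut.
Variables (V E : finType) (src dst : E -> V) (R : realType).

Lemma dist_le_wlen (len : E -> R) x p y :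
  walkb src dst x p y -> (dist src dst len x y <= (wlen len p)%:E)%E.
Proof. by move=> xpy; apply: ereal_inf_lbound; exists p. Qed.

Lemma wlen_len_minus_cut (l : E -> nat) (H : R) (C : E -> R) p :
  wlen (len_minus_cut l H C) p = wlen (fun e => (l e)%:R) p + H * wlen C p.
Proof. by rewrite /wlen /len_minus_cut big_split /= mulr_sumr. Qed.

Lemma lt_dist_len_minus_cut (l : E -> nat) (H h' : R) (C : E -> R) x p y :
  (h'%:E < dist src dst (len_minus_cut l H C) x y)%E -> walkb src dst x p y ->
  h' < wlen (fun e => (l e)%:R) p + H * wlen C p.
Proof.
move=> h'_lt xpy; rewrite -wlen_len_minus_cut -lte_fin.
by apply: lt_le_trans h'_lt _; apply: dist_le_wlen.
Qed.

Lemma simple_path_walkb q : simple_path src dst q ->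
  walkb src dst (pstart q) q.2 (pend dst q).
Proof. by case/andP. Qed.

Lemma simple_path_uniq q : simple_path src dst q -> uniq q.2.
Proof. by case/andP=> _ /= /andP[_ /map_uniq]. Qed.

Lemma sum_pair_indicator (P : V -> V -> bool) (a b : V) (x : R) :
  \sum_v \sum_(w | P v w) (if (a == v) && (b == w) then x else 0) =
  if P a b then x else 0.
Proof.
rewrite (bigD1 a) //= [X in _ + X]big1 => [|v /negbTE av]; last first.
  by apply: big1 => w _; rewrite eq_sym av.
rewrite eqxx addr0 -big_mkcondr /=.
case: ifP => Pab.
  rewrite (big_pred1 b) // => w /=.
  by rewrite eq_sym; case: eqP => [->|]; rewrite ?Pab ?andbF.
by rewrite big_pred0 // => w; case: eqP => [<-|]; rewrite ?Pab ?andbF.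
Qed.

Section Flow.
Variables (S : seq (V * seq E)) (f : V * seq E -> R).

Lemma separated_demand_le (D : V -> V -> R) (P : V -> V -> bool)
    (g : V * seq E -> R) :
  routes dst S f D ->
  {in S, forall q, P (pstart q) (pend dst q) -> f q <= g q} ->
  {in S, forall q, 0 <= g q} ->
  \sum_v \sum_(w | P v w) D v w <= \sum_(q <- S) g q.
Proof.
move=> routesD f_le_g g_ge0.
have demand_by_paths : \sum_v \sum_(w | P v w) D v w =
    \sum_(q <- S | P (pstart q) (pend dst q)) f q.
  under eq_bigr => v _ do under eq_bigr => w _ do
    rewrite -(routesD v w) big_mkcond.
  rewrite [RHS]big_mkcond /=; under [RHS]eq_bigr => q _ do
    rewrite -(sum_pair_indicator P (pstart q) (pend dst q)).
  by rewrite exchange_big; apply: eq_bigr => v _; rewrite exchange_big.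
rewrite demand_by_paths [leRHS](bigID (fun q => P (pstart q) (pend dst q))) /=.
apply: ler_wpDr.
  by rewrite big_seq_cond; apply: sumr_ge0 => q /andP[/g_ge0 g_q _].
rewrite big_seq_cond [leRHS]big_seq_cond.
by apply: ler_sum => q /andP[qS /(f_le_g _ qS)].
Qed.

Lemma sum_flow_wlen (w : E -> R) : {in S, forall q, uniq q.2} ->
  \sum_(q <- S) f q * wlen w q.2 = \sum_e w e * edge_load S f e.
Proof.
move=> S_uniq; rewrite /edge_load.
under [RHS]eq_bigr => e _ do rewrite mulr_sumr big_mkcond.
rewrite [RHS]exchange_big /= !big_seq; apply: eq_bigr => q qS.
rewrite /wlen big_uniq ?S_uniq // big_mkcond mulr_sumr /=.
by apply: eq_bigr => e _; case: ifP; rewrite ?mulr0 // mulrC.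
Qed.

Lemma weighted_load_le_congestion (u : E -> nat) (w : E -> R) :
  (forall e, (0 < u e)%N) -> (forall e, 0 <= w e) ->
  \sum_e w e * edge_load S f e <= cut_size u w * congestion u S f.
Proof.
move=> u_gt0 w_ge0; rewrite /cut_size mulr_suml; apply: ler_sum => e _.
have load_le : edge_load S f e <= (u e)%:R * congestion u S f.
  rewrite mulrC -ler_pdivrMr ?ltr0n //.
  exact: le_bigmax (fun e => edge_load S f e / (u e)%:R) e.
by rewrite (mulrC (u e)%:R) -mulrA; apply: ler_wpM2l.
Qed.

End Flow.
End FlowCut.

(* The case c = 0 holds because [0^-1 = 0]. *)
Lemma inv_sparsity_le (R : realFieldType) (s c g : R) :
  0 < s -> 0 <= c -> 0 <= g -> s <= 2 * c * g -> 1 / (2 * (c / s)) <= g.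
Proof.
move=> s_gt0; rewrite le_eqVlt => /orP[/eqP <- g_ge0 _|c_gt0 _ s_le].
  by rewrite mul0r mulr0 invr0 mulr0.
have -> : 1 / (2 * (c / s)) = s / (2 * c) by field; rewrite ?gt_eqF.
by rewrite ler_pdivrMr ?mulr_gt0 // mulrC.
Qed.

Theorem theoremA3 (R : realType) (V E : finType) (src dst : E -> V)
  (l u : E -> nat) (D : V -> V -> R) (h : R) (C : E -> R) (phi : R)
  (S : seq (V * seq E)) (f : V * seq E -> R) :
  (forall e, (0 < l e)%N) -> (forall e, (0 < u e)%N) ->
  (forall x y, 0 <= D x y) ->
  0 < h ->
  moving_cut (2 * h) C ->
  0 < sep src dst l (2 * h) C (2 * h) D ->
  phi = spars src dst l u (2 * h) C (2 * h) D ->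
  is_flow src dst S f ->
  routes dst S f D ->
  (forall q, 0 < f q -> wlen (fun e => (l e)%:R) q.2 <= h) ->
  1 / (2 * phi) <= congestion u S f.
Proof.
move=> _ u_gt0 _ h_gt0 cutC sep_gt0 -> [_ _ flowS] routesD short.
have C_ge0 e : 0 <= C e by case: (cutC e) => _ /andP[].
have flow_ge0 : {in S, forall q, 0 <= f q} by move=> q /flowS[].
have weight_ge0 : {in S, forall q, 0 <= 2 * f q * wlen C q.2}.
  by move=> q /flow_ge0 fq; rewrite !mulr_ge0 // sumr_ge0.
have half_cut : {in S, forall q,
    ((2 * h)%:E < dist src dst (len_minus_cut l (2 * h) C) (pstart q) (pend dst q))%E ->
    f q <= 2 * f q * wlen C q.2}.
  move=> q qS far; have [/simple_path_walkb qwalk fq_ge0] := flowS q qS.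
  have [fq_gt0 | fq_le0] := ltrP 0 (f q); last first.
    have -> : f q = 0 by apply: le_anti; rewrite fq_le0.
    by rewrite !(mulr0, mul0r).
  have := lt_dist_len_minus_cut far qwalk; have := short q fq_gt0.
  nra.
have cong_ge0 : 0 <= congestion u S f by apply: bigmax_ge_id.
apply: inv_sparsity_le => //; first by rewrite sumr_ge0 // => e _; rewrite mulr_ge0.
apply: le_trans (separated_demand_le routesD half_cut weight_ge0) _.
under eq_bigr => q _ do rewrite -mulrA.
rewrite -mulr_sumr sum_flow_wlen; last by move=> q /flowS[/simple_path_uniq].
by rewrite -mulrA ler_wpM2l // weighted_load_le_congestion.
Qed.
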